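(* Let $R$ be a ring, let $X$ be an $R^\circ$-complex and let $Y$ be a bounded above $R$-complex with $\sup Y=k\in\mathbb{Z}$. Then for each $n\in\mathbb{Z}$ there is an exact sequence $$0\to{\lim}^1_{i\in\mathbb{N}}H_{n+1}(X\otimes_RY_{\le k-i})\to H_{n+1}(X\check\otimes_RY)\to{\lim}_{i\in\mathbb{N}}H_n(X\otimes_RY_{\le k-i})\to0,$$ where the inverse systems are those induced on homology by the inclusions $X\otimes_RY_{\le k-v}\to X\otimes_RY_{\le k-u}$ ($u\le v$). In particular, $H_{n+1}(X\check\otimes_RY)=0$ if and only if ${\lim}^1_{i}H_{n+1}(X\otimes_RY_{\le k-i})=0={\lim}_{i}H_n(X\otimes_RY_{\le k-i})$.
   Context: $H_n$ denotes the $n$th homology. For an $R$-complex $Y$, $\sup Y=\sup\{i: Y_i\neq0\}$ and $Y_{\le m}$ is the subcomplex with $(Y_{\le m})_i=Y_i$ for $i\le m$ and $0$ otherwise. $X\otimes_RY$ has degree-$n$ term $\coprod_iX_i\otimes_RY_{n-i}$ and differential $\partial(x\otimes y)=\partial^X(x)\otimes y+(-1)^{|x|}x\otimes\partial^Y(y)$; $X\bar\otimes_RY$ has degree-$n$ term $\prod_iX_i\otimes_RY_{n-i}$ with the same differential; $X\check\otimes_RY=(X\bar\otimes_RY)/(X\otimes_RY)$. For an $\mathbb{N}$-inverse system $\{\delta_{uv}:M_v\to M_u\}$ of modules, $\lim_iM_i$ and $\lim^1_iM_i$ are the kernel and cokernel of $\prod_iM_i\to\prod_iM_i$, $(m_i)\mapsto(m_i-\delta_{i,i+1}(m_{i+1}))$.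 *)

From HB Require Import structures.
From mathcomp Require Import all_boot all_order all_algebra.
Set Implicit Arguments. Unset Strict Implicit. Unset Printing Implicit Defensive.
Import Order.TTheory GRing.Theory Num.Theory.
Local Open Scope ring_scope.

(* A right R-module (R^o-module) is a left module over the converse ring R^c. *)
Record complex (S : pzRingType) := Complex {
  cobj :> int -> lmodType S;
  cdiff : forall i : int, {linear cobj (i + 1) -> cobj i};
  cdiff2 : forall (i : int) (x : cobj (i + 1 + 1)), cdiff i (cdiff (i + 1) x) = 0 }.

Definition sup_eq (S : pzRingType) (Y : complex S) (k : int) : Prop :=
  (exists y : Y k, y != 0) /\ (forall i : int, k < i -> forall y : Y i, y = 0).

(* Tensor product A (x)_R B of a right R-module A and a left R-module B.
   Its elements are finite sums of pure tensors, represented by lists of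
   pairs; such a list represents 0 in A (x)_R B iff it is killed by every
   R-balanced biadditive map into an abelian group (universal property). *)
Definition balanced (R : pzRingType) (A : lmodType R^c) (B : lmodType R)
    (G : zmodType) (f : A -> B -> G) : Prop :=
  [/\ forall a a' b, f (a + a') b = f a b + f a' b,
      forall a b b', f a (b + b') = f a b + f a b' &
      forall (r : R) a b, f ((r : R^c) *: a) b = f a (r *: b)].

Definition tzero (R : pzRingType) (A : lmodType R^c) (B : lmodType R)
    (s : seq (A * B)) : Prop :=
  forall (G : zmodType) (f : A -> B -> G), balanced f ->
    \sum_(p <- s) f p.1 p.2 = 0.

Section Bigraded.
Variables (R : pzRingType) (X : complex R^c) (Y : complex R).

(* Bigraded representatives: F i j represents an element of X_i (x)_R Y_j.
   An element of degree n of the product total complex X \bar(x) Y is a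
   family F supported on i + j = n (components indexed by i, as in
   prod_i X_i (x) Y_{n-i}). *)
Definition bi := forall i j : int, seq (X i * Y j).

Definition badd (F G : bi) : bi := fun i j => F i j ++ G i j.
Definition bopp (F : bi) : bi := fun i j => map (fun p => (- p.1, p.2)) (F i j).
Definition bzero (F : bi) : Prop := forall i j, tzero (F i j).
Definition beq (F G : bi) : Prop := bzero (badd F (bopp G)).

Definition deg (n : int) (F : bi) : Prop :=
  forall i j, i + j != n -> tzero (F i j).
(* only finitely many nonzero components (coproduct) *)
Definition fin (F : bi) : Prop :=
  exists N : int, forall i j, N < `|i| -> tzero (F i j).
(* components in Y_j with j > m vanish: X (x) Y_{<= m} *)
Definition trunc (m : int) (F : bi) : Prop :=
  forall i j, m < j -> tzero (F i j).

Definition sgn (i : int) (M : zmodType) (x : M) : M :=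
  if odd (absz i) then - x else x.

Definition bd (F : bi) : bi := fun i j =>
  map (fun p => (cdiff X i p.1, p.2)) (F (i + 1) j)
  ++ map (fun p => (sgn i p.1, cdiff Y j p.2)) (F i (j + 1)).

Definition Ztr (n m : int) (F : bi) : Prop :=
  [/\ deg n F, fin F, trunc m F & bzero (bd F)].
Definition Btr (n m : int) (F : bi) : Prop :=
  exists G, [/\ deg (n + 1) G, fin G, trunc m G & beq F (bd G)].
End Bigraded.

(* Abelian groups presented as subquotients Z/B of a carrier with an
   addition and negation (x ~ y iff B (x - y)). *)
Record sq := SQ {
  sq_car : Type;
  sq_add : sq_car -> sq_car -> sq_car;
  sq_opp : sq_car -> sq_car;
  sq_Z : sq_car -> Prop;
  sq_B : sq_car -> Prop }.
Arguments sq_add : clear implicits.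
Arguments sq_opp : clear implicits.
Arguments sq_Z : clear implicits.
Arguments sq_B : clear implicits.

(* a function on representatives inducing a group homomorphism Z/B -> Z'/B' *)
Definition sq_hom (A B : sq) (f : sq_car A -> sq_car B) : Prop :=
  [/\ forall x, sq_Z A x -> sq_Z B (f x),
      forall x, sq_B A x -> sq_B B (f x) &
      forall x y, sq_Z A x -> sq_Z A y ->
        sq_B B (sq_add B (f (sq_add A x y)) (sq_opp B (sq_add B (f x) (f y))))].

Definition short_exact (A B C : sq) (f : sq_car A -> sq_car B)
    (g : sq_car B -> sq_car C) : Prop :=
  [/\ sq_hom f, sq_hom g,
      forall x, sq_Z A x -> sq_B B (f x) -> sq_B A x,
      forall y, sq_Z B y ->
        (sq_B C (g y) <-> exists x, sq_Z A x /\ sq_B B (sq_add B y (sq_opp B (f x)))) &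
      forall z, sq_Z C z -> exists y, sq_Z B y /\ sq_B C (sq_add C z (sq_opp C (g y)))].

Definition sq_trivial (A : sq) : Prop := forall x, sq_Z A x -> sq_B A x.

Section Groups.
Variables (R : pzRingType) (X : complex R^c) (Y : complex R).

(* H_n (X \check(x)_R Y), X \check(x) Y = (X \bar(x) Y)/(X (x) Y) *)
Definition Hcheck (n : int) : sq :=
  @SQ (bi X Y) (@badd _ X Y) (@bopp _ X Y)
    (fun F => deg n F /\ fin (bd F))
    (fun F => exists G C, [/\ deg (n + 1) G, deg n C, fin C &
                              beq F (badd (bd G) C)]).

Definition Hlim (k n : int) : sq :=
  @SQ (nat -> bi X Y)
    (fun F G i => badd (F i) (G i)) (fun F i => bopp (F i))
    (fun F => (forall i : nat, Ztr n (k - i%:Z) (F i)) /\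
              (forall i : nat, Btr n (k - i%:Z) (badd (F i) (bopp (F i.+1)))))
    (fun F => forall i : nat, Btr n (k - i%:Z) (F i)).

Definition Hlim1 (k n : int) : sq :=
  @SQ (nat -> bi X Y)
    (fun F G i => badd (F i) (G i)) (fun F i => bopp (F i))
    (fun F => forall i : nat, Ztr n (k - i%:Z) (F i))
    (fun F => exists G : nat -> bi X Y,
        (forall i : nat, Ztr n (k - i%:Z) (G i)) /\
        (forall i : nat, Btr n (k - i%:Z)
                     (badd (F i) (bopp (badd (G i) (bopp (G i.+1))))))).
End Groups.

From HB Require Import structures.
From mathcomp Require Import all_boot all_order all_algebra.
From mathcomp Require Import zify.
From Stdlib Require Import IndefiniteDescription.
Set Implicit Arguments. Unset Strict Implicit. Unset Printing Implicit Defensive.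
Import Order.TTheory GRing.Theory Num.Theory.
Local Open Scope ring_scope.

(* An element of degree [n + 1] of [X \bar(x) Y] with finite boundary is a chain [y] with
   columns [y_j] in [X (x) Y_j]. Cutting it at column [k - i] gives the finite cycles
   [d(y_{<= k - i})] of [X (x) Y_{<= k - i}] (finite because [d y] is, and [y_{> k - i}] has
   only the columns [k - i < j <= k]); consecutive ones differ by the boundary of the single
   column [y_{k - i}], so they form an element of the [lim]. Conversely a sequence of cycles
   [z_i] of [X (x) Y_{<= k - i}] has a well-defined product-total sum [sum_i z_i], since only
   [z_0, ..., z_{k - j}] reach column [j]; this is the map from [lim^1]. Exactness at every
   spot comes from telescoping: [sum_i (w_i - w_{i+1}) = w_0] with [w_0] finite, and the
   tails [sum_{l >= i} z_l] recover a sequence from its sum. *)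

Section Balanced.
Variables (R : pzRingType) (A : lmodType R^c) (B : lmodType R) (M : zmodType).
Variable f : A -> B -> M.
Hypothesis bf : balanced f.

Lemma balanced0r a : f a 0 = 0.
Proof.
case: bf => _ fD _; apply: (addrI (f a 0)).
by rewrite -fD !addr0.
Qed.

Lemma balanced0l b : f 0 b = 0.
Proof.
case: bf => fD _ _; apply: (addrI (f 0 b)).
by rewrite -fD !addr0.
Qed.

Lemma balancedNl a b : f (- a) b = - f a b.
Proof.
case: bf => fD _ _; apply: (addrI (f a b)).
by rewrite -fD !subrr balanced0l.
Qed.

End Balanced.

(* [sq] carries no group axioms; triviality transfers along a short exact sequence only when
   [B] has this property, which every subgroup has *)
Definition sq_B_ext (A : sq) : Prop :=
  forall x y, sq_B A (sq_add A x (sq_opp A y)) -> sq_B A y -> sq_B A x.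

Lemma short_exact_trivial (A B C : sq) f g : sq_B_ext B -> sq_B_ext C ->
  @short_exact A B C f g -> sq_trivial B <-> sq_trivial A /\ sq_trivial C.
Proof.
move=> Bext Cext [[fZ fB _] [gZ gB _] f_inj g_mid g_surj]; split.
  move=> B0; split=> [x xZ | z zZ]; first by apply: f_inj xZ (B0 _ (fZ _ xZ)).
  by have [y [yZ zgy]] := g_surj z zZ; apply: Cext zgy (gB _ (B0 _ yZ)).
move=> [A0 C0] y yZ; have [x [xZ yfx]] := (g_mid y yZ).1 (C0 _ (gZ _ yZ)).
exact: Bext yfx (fB _ (A0 _ xZ)).
Qed.

Lemma subrACA (M : zmodType) (a b c d : M) : (a - b) - (c - d) = (a - c) - (b - d).
Proof. by rewrite !opprB addrACA [RHS]addrACA [- b + _]addrC. Qed.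

Section Bigraded.
Variables (R : pzRingType) (X : complex R^c) (Y : complex R).
Local Notation bi := (bi X Y).
Implicit Types (F G H : bi).

Definition teval (i j : int) (M : zmodType) (f : X i -> Y j -> M)
    (s : seq (X i * Y j)) : M :=
  \sum_(p <- s) f p.1 p.2.

Lemma teval_cat i j (M : zmodType) (f : X i -> Y j -> M) s t :
  teval f (s ++ t) = teval f s + teval f t.
Proof. exact: big_cat. Qed.

Lemma teval_nil i j (M : zmodType) (f : X i -> Y j -> M) : teval f [::] = 0.
Proof. exact: big_nil. Qed.

Lemma teval_eq0 i j (M : zmodType) (f : X i -> Y j -> M) s :
  (forall a b, f a b = 0) -> teval f s = 0.
Proof. by move=> f0; rewrite /teval big1. Qed.

Lemma teval_addf i j (M : zmodType) (f g : X i -> Y j -> M) s :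
  teval (fun a b => f a b + g a b) s = teval f s + teval g s.
Proof. exact: big_split. Qed.

Lemma tzeroP i j (s : seq (X i * Y j)) :
  tzero s <-> forall (M : zmodType) (f : X i -> Y j -> M), balanced f -> teval f s = 0.
Proof. by []. Qed.

Lemma teval_tzero i j (s : seq (X i * Y j)) (M : zmodType) (f : X i -> Y j -> M) :
  tzero s -> balanced f -> teval f s = 0.
Proof. by move/tzeroP; apply. Qed.

Lemma sgnD i (M : zmodType) (a b : M) : sgn i (a + b) = sgn i a + sgn i b.
Proof. by rewrite /sgn; case: ifP => // _; exact: opprD. Qed.

Lemma sgnZ i (r : R) (a : X i) : sgn i ((r : R^c) *: a) = (r : R^c) *: sgn i a.
Proof. by rewrite /sgn; case: ifP => // _; rewrite scalerN. Qed.

Lemma sgnS i (M : zmodType) (x : M) : sgn (i + 1) x = - sgn i x.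
Proof.
rewrite /sgn.
have [-> | ->] : absz (i + 1) = (absz i).+1 \/ absz i = (absz (i + 1)).+1 by lia.
all: by rewrite /=; case: odd; rewrite ?opprK.
Qed.

Lemma cdiff_sgn i (x : X (i + 1)) : cdiff X i (sgn i x) = sgn i (cdiff X i x).
Proof. by rewrite /sgn; case: ifP => // _; rewrite raddfN. Qed.

Lemma balanced_cdiffl i j (M : zmodType) (f : X i -> Y j -> M) :
  balanced f -> balanced (fun a b => f (cdiff X i a) b).
Proof.
case=> fDl fDr fZ; split=> [a a' b | a b b' | r a b]; first by rewrite raddfD fDl.
  exact: fDr.
by rewrite linearZ /= fZ.
Qed.

Lemma balanced_cdiffr i j (M : zmodType) (f : X i -> Y j -> M) :
  balanced f -> balanced (fun a b => f (sgn i a) (cdiff Y j b)).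
Proof.
case=> fDl fDr fZ; split=> [a a' b | a b b' | r a b]; first by rewrite sgnD fDl.
  by rewrite raddfD fDr.
by rewrite linearZ /= sgnZ fZ.
Qed.

Definition bnil : bi := fun i j => [::].

Definition beqv F G := forall i j (M : zmodType) (f : X i -> Y j -> M),
  balanced f -> teval f (F i j) = teval f (G i j).

Local Notation "F =b G" := (beqv F G) (at level 70).

Lemma teval_badd F G i j (M : zmodType) (f : X i -> Y j -> M) :
  teval f (badd F G i j) = teval f (F i j) + teval f (G i j).
Proof. exact: teval_cat. Qed.

Lemma teval_bopp F i j (M : zmodType) (f : X i -> Y j -> M) : balanced f ->
  teval f (bopp F i j) = - teval f (F i j).
Proof.
move=> bf; rewrite /teval big_map -sumrN.
by apply: eq_bigr => p _; exact: balancedNl.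
Qed.

Lemma teval_bd F i j (M : zmodType) (f : X i -> Y j -> M) :
  teval f (bd F i j) = teval (fun a b => f (cdiff X i a) b) (F (i + 1) j)
                     + teval (fun a b => f (sgn i a) (cdiff Y j b)) (F i (j + 1)).
Proof. by rewrite teval_cat /teval !big_map. Qed.

Lemma beqv_refl F : F =b F. Proof. by []. Qed.
Lemma beqv_sym F G : F =b G -> G =b F.
Proof. by move=> FG i j M f bf; rewrite FG. Qed.
Lemma beqv_trans F G H : F =b G -> G =b H -> F =b H.
Proof. by move=> FG GH i j M f bf; rewrite FG // GH. Qed.

Lemma beqv_add F F' G G' : F =b F' -> G =b G' -> badd F G =b badd F' G'.
Proof. by move=> FF GG i j M f bf; rewrite !teval_badd FF // GG. Qed.
Lemma beqv_opp F F' : F =b F' -> bopp F =b bopp F'.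
Proof. by move=> FF i j M f bf; rewrite !teval_bopp // FF. Qed.
Lemma beqv_bd F F' : F =b F' -> bd F =b bd F'.
Proof.
move=> FF i j M f bf.
by rewrite !teval_bd (FF _ _ _ _ (balanced_cdiffl bf)) (FF _ _ _ _ (balanced_cdiffr bf)).
Qed.

Lemma bd_add F G : bd (badd F G) =b badd (bd F) (bd G).
Proof. by move=> i j M f bf; rewrite !teval_badd !teval_bd !teval_badd addrACA. Qed.
Lemma bd_opp F : bd (bopp F) =b bopp (bd F).
Proof.
move=> i j M f bf; rewrite !teval_bopp // !teval_bd !teval_bopp ?opprD //.
  exact: balanced_cdiffr.
exact: balanced_cdiffl.
Qed.
Lemma bd_nil : bd bnil =b bnil.
Proof. by move=> i j M f bf; rewrite teval_bd !teval_nil addr0. Qed.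

Lemma bd_bd F : bd (bd F) =b bnil.
Proof.
move=> i j M f bf; rewrite teval_nil !teval_bd.
rewrite teval_eq0; last by move=> a b; rewrite cdiff2 (balanced0l bf).
rewrite [X in _ + (_ + X)]teval_eq0; last by move=> a b; rewrite cdiff2 (balanced0r bf).
rewrite add0r addr0 -teval_addf teval_eq0 // => a b.
by rewrite sgnS raddfN /= (balancedNl bf) cdiff_sgn addNr.
Qed.

Lemma beqP F G : beq F G <-> F =b G.
Proof.
split=> FG i j; first move=> M f bf.
  by apply/eqP; rewrite -subr_eq0 -(teval_bopp G bf) -teval_badd; apply/eqP/FG.
by apply/tzeroP => M f bf; rewrite teval_badd teval_bopp // FG // subrr.
Qed.

Lemma beqv_subr_eq F G H : badd F (bopp G) =b H -> F =b badd H G.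
Proof.
by move=> FGH i j M f bf; rewrite teval_badd -FGH // teval_badd teval_bopp // subrK.
Qed.

Lemma bzeroP F : bzero F <-> F =b bnil.
Proof.
split=> FG i j; first by move=> M f bf; rewrite teval_nil; apply: FG.
by apply/tzeroP => M f bf; rewrite FG // teval_nil.
Qed.

Definition vanish_on (P : int -> int -> bool) F := forall i j, P i j -> tzero (F i j).

Lemma vanish_on_beqv P F G : F =b G -> vanish_on P F -> vanish_on P G.
Proof. by move=> FG FP i j Pij; apply/tzeroP => M f bf; rewrite -FG //; exact: FP. Qed.
Lemma vanish_on_nil P : vanish_on P bnil.
Proof. by move=> i j _; apply/tzeroP => M f bf; exact: teval_nil. Qed.
Lemma vanish_on_add P F G : vanish_on P F -> vanish_on P G -> vanish_on P (badd F G).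
Proof.
move=> FP GP i j Pij; apply/tzeroP => M f bf.
by rewrite teval_badd (teval_tzero (FP _ _ Pij) bf) (teval_tzero (GP _ _ Pij) bf) addr0.
Qed.
Lemma vanish_on_opp P F : vanish_on P F -> vanish_on P (bopp F).
Proof.
move=> FP i j Pij; apply/tzeroP => M f bf.
by rewrite teval_bopp // (teval_tzero (FP _ _ Pij) bf) oppr0.
Qed.
Lemma vanish_on_sub (P Q : int -> int -> bool) F :
  (forall i j, Q i j -> P i j) -> vanish_on P F -> vanish_on Q F.
Proof. by move=> QP FP i j /QP; exact: FP. Qed.
Lemma vanish_on_bd (P Q : int -> int -> bool) F :
  (forall i j, Q i j -> P (i + 1) j && P i (j + 1)) -> vanish_on P F -> vanish_on Q (bd F).
Proof.
move=> QP FP i j /QP /andP[P1 P2]; apply/tzeroP => M f bf.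
rewrite teval_bd (teval_tzero (FP _ _ P1) (balanced_cdiffl bf)).
by rewrite (teval_tzero (FP _ _ P2) (balanced_cdiffr bf)) addr0.
Qed.

Lemma deg_bd d F : deg (d + 1) F -> deg d (bd F).
Proof. by apply: vanish_on_bd => i j ij; apply/andP; split; lia. Qed.
Lemma trunc_bd m F : trunc m F -> trunc m (bd F).
Proof. by apply: vanish_on_bd => i j ij; apply/andP; split; lia. Qed.
Lemma trunc_le m m' F : m <= m' -> trunc m F -> trunc m' F.
Proof. by move=> mm'; apply: vanish_on_sub => i j; lia. Qed.

Lemma fin_beqv F G : F =b G -> fin F -> fin G.
Proof. by move=> FG [N FN]; exists N; exact: vanish_on_beqv FN. Qed.
Lemma fin_nil : fin bnil. Proof. by exists 0; exact: vanish_on_nil. Qed.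
Lemma fin_add F G : fin F -> fin G -> fin (badd F G).
Proof.
move=> [N FN] [N' GN']; exists (`|N| + `|N'|).
by apply: vanish_on_add; [apply: vanish_on_sub FN | apply: vanish_on_sub GN'] => i j; lia.
Qed.
Lemma fin_opp F : fin F -> fin (bopp F).
Proof. by move=> [N FN]; exists N; exact: vanish_on_opp. Qed.
Lemma fin_bd F : fin F -> fin (bd F).
Proof.
move=> [N FN]; exists (`|N| + 1); apply: vanish_on_bd FN => i j ij.
by apply/andP; split; lia.
Qed.

Definition colmask (C : pred int) F : bi := fun i j => if C j then F i j else [::].
Definition lower m := colmask (fun j => j <= m).
Definition upper m := colmask (fun j => m < j).
Definition slab m := colmask (fun j => j == m).

Lemma teval_colmask C F i j (M : zmodType) (f : X i -> Y j -> M) :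
  teval f (colmask C F i j) = if C j then teval f (F i j) else 0.
Proof. by rewrite /colmask; case: (C j); rewrite ?teval_nil. Qed.

Lemma colmask_beqv C F G : F =b G -> colmask C F =b colmask C G.
Proof. by move=> FG i j M f bf; rewrite !teval_colmask FG. Qed.

Lemma colmask_add C F G : colmask C (badd F G) =b badd (colmask C F) (colmask C G).
Proof.
by move=> i j M f bf; rewrite teval_badd !teval_colmask teval_badd; case: (C j); rewrite ?addr0.
Qed.

Lemma vanish_on_colmask P C F : vanish_on P F -> vanish_on P (colmask C F).
Proof.
move=> FP i j Pij; apply/tzeroP => M f bf; rewrite teval_colmask.
by case: (C j) => //; exact: teval_tzero (FP _ _ Pij) bf.
Qed.

Lemma vanish_on_colmaskC C F : vanish_on (fun i j => ~~ C j) (colmask C F).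
Proof. by move=> i j /negbTE Cj; apply/tzeroP => M f bf; rewrite teval_colmask Cj. Qed.

Lemma fin_colmask C F : fin F -> fin (colmask C F).
Proof. by move=> [N FN]; exists N; exact: vanish_on_colmask. Qed.

Lemma colmask_id C F : vanish_on (fun i j => ~~ C j) F -> colmask C F =b F.
Proof.
move=> FC i j M f bf; rewrite teval_colmask; case: ifP => // /negbT Cj.
by rewrite (teval_tzero (FC _ _ Cj) bf).
Qed.

Lemma trunc_lower m F : trunc m (lower m F).
Proof. by move=> i j mj; apply: vanish_on_colmaskC; lia. Qed.

Lemma trunc_slab m F : trunc m (slab m F).
Proof. by move=> i j mj; apply: vanish_on_colmaskC; lia. Qed.

Lemma lower_id m F : trunc m F -> lower m F =b F.
Proof. by move=> Fm; apply: colmask_id; apply: vanish_on_sub Fm => i j; lia. Qed.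

Lemma lower_upper m F : F =b badd (lower m F) (upper m F).
Proof.
move=> i j M f bf; rewrite teval_badd !teval_colmask.
by case: (lerP j m); rewrite ?addr0 ?add0r.
Qed.

Lemma lower_slab m F : badd (lower m F) (bopp (lower (m - 1) F)) =b slab m F.
Proof.
move=> i j M f bf; rewrite teval_badd teval_bopp // !teval_colmask.
by do 3 case: ifP => ?; rewrite ?subrr ?subr0 //; lia.
Qed.

Lemma fin_column d m F : deg d F -> vanish_on (fun i j => j != m) F -> fin F.
Proof.
move=> Fd Fm; exists `|d - m| => i j ij.
by have [jm | ] := eqVneq j m; [apply: Fd; lia | exact: Fm].
Qed.

Lemma fin_slab d m F : deg d F -> fin (slab m F).
Proof.
move=> Fd; apply: (fin_column (vanish_on_colmask _ Fd)).
exact: vanish_on_colmaskC.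
Qed.

Definition lower_comm m F := badd (lower m (bd F)) (bopp (bd (lower m F))).

Lemma lower_comm_column m F : vanish_on (fun i j => j != m) (lower_comm m F).
Proof.
move=> i j jm; apply/tzeroP => M f bf.
rewrite teval_badd teval_bopp // teval_colmask !teval_bd !teval_colmask.
by do 2 case: ifP => ?; rewrite ?addr0 ?subrr //; lia.
Qed.

Lemma deg_lower_comm d m F : deg (d + 1) F -> deg d (lower_comm m F).
Proof.
move=> Fd; apply: vanish_on_add; first exact/vanish_on_colmask/deg_bd.
by apply/vanish_on_opp/deg_bd/vanish_on_colmask.
Qed.

Lemma fin_lower_comm d m F : deg (d + 1) F -> fin (lower_comm m F).
Proof. by move=> Fd; apply: fin_column (deg_lower_comm m Fd) _; exact: lower_comm_column. Qed.

Lemma trunc_lower_comm m F : trunc m (lower_comm m F).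
Proof.
by apply: vanish_on_add; [exact: trunc_lower | apply/vanish_on_opp/trunc_bd/trunc_lower].
Qed.

Lemma Btr_beqv d m F F' : F =b F' -> Btr d m F -> Btr d m F'.
Proof.
move=> FF [G [Gd Gfin Gm /beqP FG]]; exists G; split => //.
exact/beqP/(beqv_trans (beqv_sym FF)).
Qed.

Lemma Btr_bd d m G : deg (d + 1) G -> fin G -> trunc m G -> Btr d m (bd G).
Proof. by move=> Gd Gfin Gm; exists G; split => //; exact/beqP. Qed.

Lemma Btr_nil d m : Btr d m bnil.
Proof.
apply: Btr_beqv bd_nil _.
by apply: Btr_bd; [exact: vanish_on_nil | exact: fin_nil | exact: vanish_on_nil].
Qed.

Lemma Btr_add d m F F' : Btr d m F -> Btr d m F' -> Btr d m (badd F F').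
Proof.
move=> [G [Gd Gfin Gm /beqP FG]] [G' [Gd' Gfin' Gm' /beqP FG']].
apply: Btr_beqv (Btr_bd (vanish_on_add Gd Gd') (fin_add Gfin Gfin') (vanish_on_add Gm Gm')).
exact: beqv_trans (bd_add G G') (beqv_sym (beqv_add FG FG')).
Qed.

Lemma Btr_eqv d m F G : F =b G -> Btr d m (badd F (bopp G)).
Proof.
move=> FG; apply: Btr_beqv (Btr_nil d m) => i j M f bf.
by rewrite teval_nil teval_badd teval_bopp // FG // subrr.
Qed.

Definition Bcheck d F := exists G C,
  [/\ deg (d + 1) G, deg d C, fin C & beq F (badd (bd G) C)].

Lemma Bcheck_beqv d F F' : F =b F' -> Bcheck d F -> Bcheck d F'.
Proof.
move=> FF [G [C [Gd Cd Cfin /beqP FGC]]]; exists G, C; split => //.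
exact/beqP/(beqv_trans (beqv_sym FF)).
Qed.

Lemma Bcheck_fin d F : deg d F -> fin F -> Bcheck d F.
Proof.
move=> Fd Ffin; exists bnil, F; split => //; first exact: vanish_on_nil.
by apply/beqP => i j M f bf; rewrite teval_badd bd_nil // teval_nil add0r.
Qed.

Lemma Bcheck_add d F F' : Bcheck d F -> Bcheck d F' -> Bcheck d (badd F F').
Proof.
move=> [G [C [Gd Cd Cfin /beqP FGC]]] [G' [C' [Gd' Cd' Cfin' /beqP FGC']]].
exists (badd G G'), (badd C C'); split; [exact: vanish_on_add.. | exact: fin_add |].
apply/beqP => i j M f bf; rewrite !teval_badd FGC // FGC' // !teval_badd bd_add //.
by rewrite teval_badd addrACA.
Qed.

Lemma Bcheck_eqv d F G : F =b G -> Bcheck d (badd F (bopp G)).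
Proof.
move=> FG; apply: Bcheck_beqv (Bcheck_fin _ fin_nil); last exact: vanish_on_nil.
by move=> i j M f bf; rewrite teval_nil teval_badd teval_bopp // FG // subrr.
Qed.

Definition cycle_seq d m (z : nat -> bi) := forall i : nat, Ztr d (m - i%:Z) (z i).

Section BoundedAbove.
Variable k : int.
Hypothesis Y_gt_k : forall i : int, k < i -> forall y : Y i, y = 0.

Lemma trunc_sup F : trunc k F.
Proof.
move=> i j kj; apply/tzeroP => M f bf; apply: teval_eq0 => a b.
by rewrite (Y_gt_k kj b) (balanced0r bf).
Qed.

Lemma fin_upper d m F : deg d F -> fin (upper m F).
Proof.
move=> Fd; exists (`|d - k| + `|d - m|) => i j ij.
have [jm | mj] := lerP j m; first by apply: vanish_on_colmaskC; rewrite -leNgt.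
have [jk | kj] := lerP j k; first by apply: vanish_on_colmask Fd _ _ _; lia.
exact: vanish_on_colmask (trunc_sup F) _ _ kj.
Qed.

Definition psum (h : nat -> bi) (N : nat) : bi :=
  fun i j => \big[cat/[::]]_(0 <= l < N) h l i j.

(* the number of [l : nat] with [j <= k - l] *)
Definition nterms (j : int) : nat := if j <= k then absz (k - j + 1) else 0.

(* Since [h l] lives in [Y_{<= k - l}], only its first [nterms j] terms reach column [j]: for
   such families [bsum h] is the product-total infinite sum of the [h l]. *)
Definition bsum (h : nat -> bi) : bi := fun i j => psum h (nterms j) i j.
Definition shift (h : nat -> bi) (s : nat) : nat -> bi := fun l => h (l + s)%N.
Definition trunc_family (h : nat -> bi) := forall l : nat, trunc (k - l%:Z) (h l).

Lemma teval_psum h N i j (M : zmodType) (f : X i -> Y j -> M) :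
  teval f (psum h N i j) = \sum_(0 <= l < N) teval f (h l i j).
Proof. exact: (big_morph (teval f) (teval_cat f) (teval_nil f)). Qed.

Lemma nterms_leq j (l : nat) : (nterms j <= l)%N = (k - l%:Z < j).
Proof. by rewrite /nterms; case: ifP => jk; apply/idP/idP; lia. Qed.

Lemma nterms_S j : (nterms (j + 1) <= nterms j)%N.
Proof. by rewrite nterms_leq; have := nterms_leq j (nterms j); rewrite leqnn; lia. Qed.

Lemma trunc_family_tzero h i j (l : nat) :
  trunc_family h -> (nterms j <= l)%N -> tzero (h l i j).
Proof. by move=> hk; rewrite nterms_leq; exact: hk. Qed.

Lemma teval_psum_stable h i j (M : zmodType) (f : X i -> Y j -> M) (L N : nat) :
  (forall l, (L <= l)%N -> tzero (h l i j)) -> balanced f -> (L <= N)%N ->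
  teval f (psum h N i j) = teval f (psum h L i j).
Proof.
move=> h0 bf LN; rewrite !teval_psum (big_cat_nat (leq0n L) LN) /=.
rewrite [X in _ + X]big1_seq ?addr0 // => l.
by rewrite mem_index_iota => /andP[_ /andP[Ll _]]; exact: teval_tzero (h0 l Ll) bf.
Qed.

Lemma bsum_add h h' : bsum (fun l => badd (h l) (h' l)) =b badd (bsum h) (bsum h').
Proof.
move=> i j M f bf; rewrite teval_badd !teval_psum -big_split /=.
by apply: eq_bigr => l _; rewrite teval_badd.
Qed.

Lemma bsum_opp h : bsum (fun l => bopp (h l)) =b bopp (bsum h).
Proof.
move=> i j M f bf; rewrite teval_bopp // !teval_psum -sumrN /=.
by apply: eq_bigr => l _; rewrite teval_bopp.
Qed.

Lemma bsum_beqv h h' : (forall l, h l =b h' l) -> bsum h =b bsum h'.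
Proof. by move=> hh i j M f bf; rewrite !teval_psum; apply: eq_bigr => l _; exact: hh. Qed.

Lemma bsum_nil h : (forall l, h l =b bnil) -> bsum h =b bnil.
Proof.
move=> h0 i j M f bf; rewrite teval_nil teval_psum big1 // => l _.
by rewrite h0 // teval_nil.
Qed.

Lemma bsum_bd h : trunc_family h -> bd (bsum h) =b bsum (fun l => bd (h l)).
Proof.
move=> hk i j M f bf; rewrite teval_bd.
rewrite -(@teval_psum_stable h i (j + 1) _ _ (nterms (j + 1)) (nterms j)).
- by rewrite !teval_psum -big_split; apply: eq_bigr => l _; rewrite teval_bd.
- by move=> l; exact: trunc_family_tzero.
- exact: balanced_cdiffr.
- exact: nterms_S.
Qed.

Lemma vanish_on_psum P h N : (forall l, vanish_on P (h l)) -> vanish_on P (psum h N).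
Proof.
move=> hP i j Pij; apply/tzeroP => M f bf; rewrite teval_psum big1 // => l _.
exact: teval_tzero (hP l i j Pij) bf.
Qed.

Lemma vanish_on_bsum P h : (forall l, vanish_on P (h l)) -> vanish_on P (bsum h).
Proof. by move=> hP i j Pij; exact: vanish_on_psum. Qed.

Lemma fin_psum h N : (forall l, fin (h l)) -> fin (psum h N).
Proof.
move=> hfin; elim: N => [|N IH].
  by apply: fin_beqv fin_nil => i j M f bf; rewrite teval_psum big_geq // teval_nil.
apply: fin_beqv (fin_add IH (hfin N)) => i j M f bf.
by rewrite teval_badd !teval_psum big_nat_recr.
Qed.

Lemma trunc_family_shift h s : trunc_family h -> trunc_family (shift h s).
Proof. by move=> hk l; apply: trunc_le (hk _); lia. Qed.

Lemma trunc_bsum_shift h (s : nat) :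
  trunc_family h -> trunc (k - s%:Z) (bsum (shift h s)).
Proof. by move=> hk; apply: vanish_on_bsum => l; apply: trunc_le (hk _); lia. Qed.

Lemma bsum_telescope u :
  trunc_family u -> bsum (fun l => badd (u l) (bopp (u l.+1))) =b u 0%N.
Proof.
move=> uk i j M f bf; rewrite teval_psum.
rewrite (telescope_sumr_eq (fun l => - teval f (u l i j))) //; last first.
  by move=> l _; rewrite teval_badd teval_bopp // opprK addrC.
rewrite (teval_tzero (@trunc_family_tzero u i j _ uk (leqnn _)) bf).
by rewrite oppr0 opprK add0r.
Qed.

Lemma lower_bsum h (s : nat) : trunc_family h ->
  lower (k - s%:Z) (bsum h) =b badd (lower (k - s%:Z) (psum h s)) (bsum (shift h s)).
Proof.
move=> hk i j M f bf; rewrite teval_badd !teval_colmask; case: ifP => jk.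
- have sN : (s <= nterms j)%N by rewrite /nterms ifT; lia.
  rewrite /bsum (teval_psum h (nterms j)) (big_cat_nat (leq0n s) sN) /= -teval_psum.
  congr (_ + _).
  rewrite -{1}(add0n s) big_addn.
  rewrite (@teval_psum_stable (shift h s) i j _ _ (nterms j - s) (nterms j)).
  + by rewrite teval_psum.
  + by move=> l ls; apply: (@trunc_family_tzero h i j (l + s)) => //; lia.
  + exact: bf.
  + exact: leq_subr.
- rewrite add0r teval_psum big1 // => l _; apply: teval_tzero bf.
  by apply: hk; lia.
Qed.

Lemma cycle_seq_trunc d z : cycle_seq d k z -> trunc_family z.
Proof. by move=> zZ l; case: (zZ l). Qed.

Lemma bsum_cycle d z : cycle_seq d k z -> deg d (bsum z) /\ fin (bd (bsum z)).
Proof.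
move=> zZ; split; first by apply: vanish_on_bsum => l; case: (zZ l).
apply: fin_beqv fin_nil; apply: beqv_sym; apply: beqv_trans (bsum_bd (cycle_seq_trunc zZ)) _.
by apply: bsum_nil => l; case: (zZ l) => _ _ _ /bzeroP.
Qed.

Lemma bsum_boundary d z w : cycle_seq d k w ->
    (forall i : nat, Btr d (k - i%:Z) (badd (z i) (bopp (badd (w i) (bopp (w i.+1)))))) ->
  Bcheck d (bsum z).
Proof.
move=> wZ /functional_choice[h hB].
have hk : trunc_family h by move=> l; case: (hB l).
have zE l : z l =b badd (bd (h l)) (badd (w l) (bopp (w l.+1))).
  by case: (hB l) => _ _ _ /beqP; exact: beqv_subr_eq.
exists (bsum h), (w 0%N); split; first by apply: vanish_on_bsum => l; case: (hB l).
- by case: (wZ 0%N).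
- by case: (wZ 0%N).
apply/beqP; apply: beqv_trans (bsum_beqv zE) _; apply: beqv_trans (bsum_add _ _) _.
exact: beqv_add (beqv_sym (bsum_bd hk)) (bsum_telescope (cycle_seq_trunc wZ)).
Qed.

Definition dlower F (i : nat) : bi := bd (lower (k - i%:Z) F).

Lemma lower_S (i : nat) F : lower (k - i.+1%:Z) F = lower (k - i%:Z - 1) F.
Proof. by rewrite -addn1 PoszD opprD addrA. Qed.

Lemma dlower_add F F' i : dlower (badd F F') i =b badd (dlower F i) (dlower F' i).
Proof. exact: beqv_trans (beqv_bd (colmask_add _ _ _)) (bd_add _ _). Qed.

Lemma dlower_beqv F F' i : F =b F' -> dlower F i =b dlower F' i.
Proof. by move=> FF; apply/beqv_bd/colmask_beqv. Qed.

Lemma dlower_slab F (i : nat) :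
  badd (dlower F i) (bopp (dlower F i.+1)) =b bd (slab (k - i%:Z) F).
Proof.
rewrite /dlower lower_S; apply: beqv_trans (beqv_add (beqv_refl _) (beqv_sym (bd_opp _))) _.
exact: beqv_trans (beqv_sym (bd_add _ _)) (beqv_bd (lower_slab _ _)).
Qed.

Lemma dlower_cycle d y : deg (d + 1) y -> fin (bd y) ->
  cycle_seq d k (dlower y) /\
  forall i : nat, Btr d (k - i%:Z) (badd (dlower y i) (bopp (dlower y i.+1))).
Proof.
move=> yd ybd; split=> i; last first.
  apply: Btr_beqv (beqv_sym (dlower_slab y i)) _.
  apply: Btr_bd; [exact: vanish_on_colmask | exact: fin_slab yd | exact: trunc_slab].
have yE : badd (bd y) (bopp (bd (upper (k - i%:Z) y))) =b dlower y i.
  move=> a b M f bf; rewrite teval_badd teval_bopp // (beqv_bd (lower_upper (k - i%:Z) y)) //.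
  by rewrite bd_add // teval_badd addrK.
split; [exact/deg_bd/vanish_on_colmask | | exact/trunc_bd/trunc_lower | exact/bzeroP/bd_bd].
exact: fin_beqv yE (fin_add ybd (fin_opp (fin_bd (fin_upper _ yd)))).
Qed.

Lemma dlower_boundary d y :
  Bcheck (d + 1) y -> forall i : nat, Btr d (k - i%:Z) (dlower y i).
Proof.
move=> [G [C [Gd Cd Cfin /beqP yE]]] i; rewrite /dlower; move: (k - i%:Z) => m.
apply: Btr_beqv _ (Btr_bd
  (vanish_on_add (deg_lower_comm m Gd) (vanish_on_colmask (fun j => j <= m) Cd))
  (fin_add (fin_lower_comm m Gd) (fin_colmask (fun j => j <= m) Cfin))
  (vanish_on_add (trunc_lower_comm (m:=m) G) (trunc_lower (m:=m) C))).
move=> a b M f bf; rewrite (beqv_bd (colmask_beqv _ yE)) // (beqv_bd (colmask_add _ _ _)) //.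
rewrite !(bd_add, teval_badd) // bd_opp // teval_bopp // bd_bd // teval_nil.
by rewrite subr0.
Qed.

Lemma bsum_shiftS z (i : nat) : trunc_family z ->
  badd (bsum (shift z i)) (bopp (bsum (shift z i.+1))) =b z i.
Proof.
move=> zk; apply: beqv_trans _ (bsum_telescope (trunc_family_shift i zk)).
apply: beqv_sym; apply: beqv_trans (bsum_add _ _) (beqv_add (beqv_refl _) _).
apply: beqv_trans (bsum_opp _) (beqv_opp (bsum_beqv _)) => l.
by rewrite /shift addSnnS.
Qed.

Lemma bsum_boundary_inv d z : cycle_seq d k z -> Bcheck d (bsum z) ->
  exists w, cycle_seq d k w /\
    forall i : nat, Btr d (k - i%:Z) (badd (z i) (bopp (badd (w i) (bopp (w i.+1))))).
Proof.
move=> zZ [G [C [Gd _ Cfin /beqP zE]]]; have zk := cycle_seq_trunc zZ.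
have zd l : deg d (z l) by case: (zZ l).
(* the tails of [bsum z = bd G + C], corrected by [bd G] below column [k - i], are finite *)
pose w (i : nat) := badd (bsum (shift z i)) (bopp (dlower G i)).
exists w; split=> i; last first.
  apply: Btr_beqv _ (Btr_bd (vanish_on_colmask (fun j => j == k - i%:Z) Gd)
    (fin_slab _ Gd) (trunc_slab (m:=k - i%:Z) G)).
  move=> a b M f bf.
  have zS := bsum_shiftS i zk bf; have GS := dlower_slab G i bf.
  rewrite !(teval_badd, teval_bopp) // in zS GS *.
  by rewrite subrACA zS GS subKr.
have wE : badd (badd (lower_comm (k - i%:Z) G) (lower (k - i%:Z) C))
               (bopp (lower (k - i%:Z) (psum z i))) =b w i.
  move=> a b M f bf; rewrite /w /lower_comm !(teval_badd, teval_bopp) //.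
  have lowerE := lower_bsum i zk bf; rewrite teval_badd in lowerE.
  have -> : teval f (bsum (shift z i) a b) =
      teval f (lower (k - i%:Z) (bsum z) a b) - teval f (lower (k - i%:Z) (psum z i) a b).
    by rewrite lowerE addrC addKr.
  rewrite (colmask_beqv _ zE) // (colmask_add _ _ _) // teval_badd.
  by rewrite (addrAC _ (- _)) [RHS]addrAC.
split.
- apply: vanish_on_add; first by apply: vanish_on_bsum => l; exact: zd.
  by apply/vanish_on_opp/deg_bd/vanish_on_colmask.
- apply: fin_beqv wE (fin_add (fin_add (fin_lower_comm _ Gd) (fin_colmask _ Cfin)) _).
  by apply/fin_opp/fin_colmask/fin_psum => l; case: (zZ l).
- apply: vanish_on_add; first exact: trunc_bsum_shift.
  by apply/vanish_on_opp/trunc_bd/trunc_lower.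
- apply/bzeroP => a b M f bf.
  rewrite bd_add // teval_badd bd_opp // teval_bopp // bd_bd // teval_nil oppr0 addr0.
  rewrite (bsum_bd (trunc_family_shift i zk)) // bsum_nil ?teval_nil // => l.
  by case: (zZ (l + i)%N) => _ _ _ /bzeroP.
Qed.

Lemma dlower_bsum h (i : nat) : trunc_family h ->
  dlower (bsum h) i
    =b badd (bd (lower (k - i%:Z) (psum h i))) (bsum (fun l => bd (shift h i l))).
Proof.
move=> hk; apply: beqv_trans (beqv_bd (lower_bsum i hk)) _.
exact: beqv_trans (bd_add _ _) (beqv_add (beqv_refl _) (bsum_bd (trunc_family_shift i hk))).
Qed.

Lemma dlower_bsum_boundary d z (i : nat) : cycle_seq (d + 1) k z ->
  Btr d (k - i%:Z) (dlower (bsum z) i).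
Proof.
move=> zZ; have zk := cycle_seq_trunc zZ.
have zd l : deg (d + 1) (z l) by case: (zZ l).
have zfin l : fin (z l) by case: (zZ l).
apply: Btr_beqv _ (Btr_bd
  (vanish_on_colmask (fun j => j <= k - i%:Z) (vanish_on_psum i zd))
  (fin_colmask (fun j => j <= k - i%:Z) (fin_psum i zfin)) (trunc_lower (m:=k - i%:Z) _)).
apply: beqv_sym; apply: beqv_trans (dlower_bsum i zk) _.
move=> a b M f bf; rewrite teval_badd bsum_nil ?teval_nil ?addr0 // => l.
by case: (zZ (l + i)%N) => _ _ _ /bzeroP.
Qed.

Lemma dlower_boundary_inv d y : deg (d + 1) y ->
    (forall i : nat, Btr d (k - i%:Z) (dlower y i)) ->
  exists x, cycle_seq (d + 1) k x /\ Bcheck (d + 1) (badd y (bopp (bsum x))).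
Proof.
move=> yd /functional_choice[h hB].
have hd l : deg (d + 1) (h l) by case: (hB l).
(* [u l] is the cycle [y_{<= k - l} - h l]; its consecutive differences are finite *)
pose u (l : nat) := badd (lower (k - l%:Z) y) (bopp (h l)).
have uk : trunc_family u.
  by move=> l; apply: vanish_on_add; [exact: trunc_lower | apply/vanish_on_opp; case: (hB l)].
have ud l : deg (d + 1) (u l).
  by apply: vanish_on_add; [exact: vanish_on_colmask _ yd | exact/vanish_on_opp/hd].
have u_cycle l : bd (u l) =b bnil.
  case: (hB l) => _ _ _ /beqP yh a b M f bf.
  rewrite bd_add // teval_badd bd_opp // teval_bopp // -(yh _ _ _ _ bf).
  by rewrite subrr teval_nil.
have uS l :
    badd (u l) (bopp (u l.+1)) =b badd (slab (k - l%:Z) y) (badd (bopp (h l)) (h l.+1)).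
  move=> a b M f bf; have yS := lower_slab (k - l%:Z) y bf.
  rewrite !(teval_badd, teval_bopp) // in yS *.
  by rewrite subrACA lower_S yS opprB [- _ + _]addrC.
exists (fun l => badd (u l) (bopp (u l.+1))); split=> [i|].
  split; [exact: vanish_on_add (ud _) (vanish_on_opp (ud _)) | | |].
  - apply: fin_beqv (beqv_sym (uS i)) (fin_add (fin_slab _ yd) (fin_add _ _)).
      by apply: fin_opp; case: (hB i).
    by case: (hB i.+1).
  - apply: vanish_on_add (uk i) (vanish_on_opp (trunc_le _ (uk i.+1))); lia.
  - apply/bzeroP => a b M f bf.
    by rewrite bd_add // teval_badd bd_opp // teval_bopp // !u_cycle // teval_nil subrr.
case: (hB 0%N) => h0d h0fin _ _; apply: Bcheck_beqv _ (Bcheck_fin h0d h0fin).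
move=> a b M f bf; rewrite teval_badd teval_bopp // (bsum_telescope uk) //.
by rewrite teval_badd teval_bopp // lower_id ?subKr //; apply: trunc_le (trunc_sup y); lia.
Qed.

Lemma dlower_boundary_mod_bsum d y x : cycle_seq (d + 1) k x ->
    Bcheck (d + 1) (badd y (bopp (bsum x))) ->
  forall i : nat, Btr d (k - i%:Z) (dlower y i).
Proof.
move=> xZ yB i; apply: Btr_beqv (Btr_add (dlower_boundary yB i) (dlower_bsum_boundary i xZ)).
apply: beqv_trans (beqv_sym (dlower_add _ _ _)) (dlower_beqv _ _) => a b M f bf.
by rewrite !teval_badd teval_bopp // subrK.
Qed.

Lemma dlower_surjective d z : cycle_seq d k z ->
    (forall i : nat, Btr d (k - i%:Z) (badd (z i) (bopp (z i.+1)))) ->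
  exists y, (deg (d + 1) y /\ fin (bd y)) /\
    forall i : nat, Btr d (k - i%:Z) (badd (z i) (bopp (dlower y i))).
Proof.
move=> zZ /functional_choice[h hB]; have zk := cycle_seq_trunc zZ.
have hk : trunc_family h by move=> l; case: (hB l).
have hd l : deg (d + 1) (h l) by case: (hB l).
have hfin l : fin (h l) by case: (hB l).
have hE l : bd (h l) =b badd (z l) (bopp (z l.+1)).
  by case: (hB l) => _ _ _ /beqP; exact: beqv_sym.
have bd_bsum_h : bd (bsum h) =b z 0%N.
  exact: beqv_trans (bsum_bd hk) (beqv_trans (bsum_beqv hE) (bsum_telescope zk)).
exists (bsum h); split.
  split; first exact: vanish_on_bsum.
  by apply: fin_beqv (beqv_sym bd_bsum_h) _; case: (zZ 0%N).
move=> i; apply: Btr_beqv _ (Btr_bd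
  (vanish_on_opp (vanish_on_colmask (fun j => j <= k - i%:Z) (vanish_on_psum i hd)))
  (fin_opp (fin_colmask (fun j => j <= k - i%:Z) (fin_psum i hfin)))
  (vanish_on_opp (trunc_lower (m:=k - i%:Z) _))).
have tailE : bsum (fun l => bd (shift h i l)) =b z i.
  apply: beqv_trans (bsum_beqv (fun l => hE (l + i)%N)) _.
  exact: bsum_telescope (trunc_family_shift i zk).
move=> a b M f bf; rewrite bd_opp // teval_bopp // teval_badd teval_bopp //.
rewrite (dlower_bsum i hk) // teval_badd (tailE _ _ _ _ bf).
by rewrite opprD addrCA subrr addr0.
Qed.

Lemma check_short_exact n :
  @short_exact (Hlim1 X Y k (n + 1)) (Hcheck X Y (n + 1)) (Hlim X Y k n) bsum dlower.
Proof.
split.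
- split=> [z | z [w [wZ wB]] | z z' _ _]; [exact: bsum_cycle | exact: bsum_boundary wZ wB |].
  exact: Bcheck_eqv (bsum_add z z').
- split=> [y [yd ybd] | y yB | y y' _ _ i]; [exact: dlower_cycle | exact: dlower_boundary |].
  exact: Btr_eqv (dlower_add y y' i).
- by move=> z zZ; exact: bsum_boundary_inv.
- move=> y [yd _]; split; first exact: dlower_boundary_inv.
  by move=> [x [xZ xB]]; exact: dlower_boundary_mod_bsum xB.
- by move=> z [zZ zS]; exact: dlower_surjective.
Qed.

End BoundedAbove.

Lemma Hcheck_B_ext d : sq_B_ext (Hcheck X Y d).
Proof.
move=> F G FG GB; apply: Bcheck_beqv _ (Bcheck_add FG GB).
by move=> a b M f bf; rewrite !teval_badd teval_bopp // subrK.
Qed.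

Lemma Hlim_B_ext k d : sq_B_ext (Hlim X Y k d).
Proof.
move=> F G FG GB i; apply: Btr_beqv _ (Btr_add (FG i) (GB i)).
by move=> a b M f bf; rewrite !teval_badd teval_bopp // subrK.
Qed.

End Bigraded.

Theorem corollary3p7 (R : pzRingType) (X : complex R^c) (Y : complex R)
    (k : int) (hk : sup_eq Y k) (n : int) :
  (exists (f : sq_car (Hlim1 X Y k (n + 1)) -> sq_car (Hcheck X Y (n + 1)))
          (g : sq_car (Hcheck X Y (n + 1)) -> sq_car (Hlim X Y k n)),
      short_exact f g)
  /\ (sq_trivial (Hcheck X Y (n + 1)) <->
      sq_trivial (Hlim1 X Y k (n + 1)) /\ sq_trivial (Hlim X Y k n)).
Proof.
have ses := @check_short_exact R X Y k hk.2 n.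
split; first by exists (bsum k), (dlower k).
exact: short_exact_trivial (@Hcheck_B_ext R X Y _) (@Hlim_B_ext R X Y _ _) ses.
Qed.
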